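(* Let $n\geq 1$ and let $x_1,\dots,x_n\in(0,\tfrac12]$ be not all equal. With $A_n,G_n,A'_n,G'_n$ as in the context, put $r=\frac{\ln(A'_n/G'_n)}{\ln(A_n/G_n)}$. Then $$\frac{A'_n}{G'_n}<\left(\frac{A_n}{G_n}\right)^{\frac{A'_n-G'_n}{A_n-G_n}-r\ln\sqrt{\frac{A'_nG'_n}{A_nG_n}}}<\left(\frac{A_n}{G_n}\right)^{\frac{A'_n-G'_n}{A_n-G_n}-r\ln\frac{A'_n}{A_n}}<\left(\frac{A_n}{G_n}\right)^{1-r\ln\frac{A'_n}{A_n}}<\frac{A_n}{G_n},$$ $$\frac{A'_n}{G'_n}<\max\left\{\left(\frac{A'_n}{G'_n}\right)^{1+\ln\sqrt{\frac{A'_nG'_n}{A_nG_n}}},\left(\frac{A'_n}{G'_n}\right)^{\frac{A_n-G_n}{A'_n-G'_n}}\right\}<\left(\frac{A'_n}{G'_n}\right)^{\left(1+\ln\sqrt{\frac{A'_nG'_n}{A_nG_n}}\right)\frac{A_n-G_n}{A'_n-G'_n}}<\frac{A_n}{G_n},$$ and $$\frac{{A'_n}^n-{G'_n}^n}{{A_n}^n-{G_n}^n}<\frac{{A'_n}^n{G'_n}^n\ln\frac{A'_n}{G'_n}}{{A_n}^n{G_n}^n\ln\frac{A_n}{G_n}}.$$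
   Context: $A_n=\frac1n\sum_{i=1}^n x_i$ and $G_n=\prod_{i=1}^n x_i^{1/n}$ are the arithmetic and geometric means of $x_1,\dots,x_n$; $A'_n=\frac1n\sum_{i=1}^n(1-x_i)$ and $G'_n=\prod_{i=1}^n(1-x_i)^{1/n}$ are the arithmetic and geometric means of $1-x_1,\dots,1-x_n$. *)

From Stdlib Require Import Reals Lra.
Open Scope R_scope.

Fixpoint rsum (n : nat) (f : nat -> R) : R :=
  match n with O => 0 | S m => rsum m f + f m end.
Fixpoint rprod (n : nat) (f : nat -> R) : R :=
  match n with O => 1 | S m => rprod m f * f m end.

(* arithmetic and geometric means of x_1..x_n (indexed 0..n-1) *)
Definition AM (n : nat) (x : nat -> R) : R := rsum n x / INR n.
Definition GM (n : nat) (x : nat -> R) : R := Rpower (rprod n x) (1 / INR n).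
Definition AM' (n : nat) (x : nat -> R) : R := AM n (fun i => 1 - x i).
Definition GM' (n : nat) (x : nat -> R) : R := GM n (fun i => 1 - x i).

From Stdlib Require Import Reals Lra Lia.
From Coquelicot Require Import Coquelicot.
Open Scope R_scope.

(* Write A/G = e^s, A'/G' = e^t and A'/A = e^a, so that
   ln sqrt (A'G'/(AG)) = a + (s - t)/2.  Since x_i <= 1/2 we have A <= 1/2 <= G', hence t <= a,
   and two classical facts: Ky Fan's inequality A'/G' < A/G (that is t < s), which is Jensen's
   inequality for the convex function ln (1 - y) - ln y on (0, 1/2], and Alzer's inequality
   A' - G' < A - G.  The latter comes from the geometric mean zeta(θ) of the numbers
   1/2 - θ (1/2 - x_i): zeta(1) = G, zeta(-1) = G', and zeta''' < 0 forces
   zeta(-1) - zeta(1) > -2 zeta'(0) = 1 - 2A.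

   Every comparison of exponents then reduces to the single estimate
     t (1 + a + (s - t)/2) < e^a (1 - e^-t) s / (1 - e^-s),
   which follows from 1 - e^-v = v e^(-v/2) sinhc (v/2) together with the monotonicity of
   sinhc y and of sinhc y e^(-y^2/6) on (0, oo).  The same factorisation bounds
   (1 - e^-(nt)) / (1 - e^-(ns)) by (t/s) e^(n(s-t)/2), which gives the last inequality. *)

Lemma derive_pos_lt (f f' : R -> R) a b : a < b ->
  (forall c, a <= c <= b -> is_derive f c (f' c)) ->
  (forall c, a < c < b -> 0 < f' c) -> f a < f b.
Proof.
  intros Hab Hd Hpos.
  destruct (MVT_cor2 f f' a b Hab) as [c [Hc Hcab]].
  { intros c Hc. apply is_derive_Reals. auto. }
  specialize (Hpos c Hcab). nra.
Qed.

Lemma derive_nonneg_le (f f' : R -> R) a b : a <= b ->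
  (forall c, a <= c <= b -> is_derive f c (f' c)) ->
  (forall c, a < c < b -> 0 <= f' c) -> f a <= f b.
Proof.
  intros Hab Hd Hnn. destruct (Rle_lt_or_eq_dec a b Hab) as [Hlt | <-]; [|lra].
  destruct (MVT_cor2 f f' a b Hlt) as [c [Hc Hcab]].
  { intros c Hc. apply is_derive_Reals. auto. }
  specialize (Hnn c Hcab). nra.
Qed.

(* [auto_derive] leaves the derivatives of unknown functions eta-expanded. *)
Lemma Derive_eta_unique (f : R -> R) x l : is_derive f x l -> Derive (fun y => f y) x = l.
Proof. apply is_derive_unique. Qed.

(** * Hyperbolic estimates *)

Lemma exp_le x y : x <= y -> exp x <= exp y.
Proof. intros [Hlt | ->]; [left; apply exp_increasing, Hlt | right; reflexivity]. Qed.

Lemma exp_sub x y : exp (x - y) = exp x / exp y.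
Proof. unfold Rminus, Rdiv. rewrite exp_plus, exp_Ropp. reflexivity. Qed.

Lemma cosh_ge_1 y : 1 <= cosh y.
Proof. unfold cosh. pose proof (exp_ineq1_le y). pose proof (exp_ineq1_le (- y)). lra. Qed.

Lemma sinh_ge_id y : 0 <= y -> y <= sinh y.
Proof.
  intros Hy. enough (0 - 0 <= sinh y - y) by lra.
  rewrite <- sinh_0 at 1.
  apply (derive_nonneg_le (fun z => sinh z - z) (fun z => cosh z - 1)); [lra| |].
  - intros c _. unfold sinh, cosh. auto_derive; [easy | lra].
  - intros c _. pose proof (cosh_ge_1 c). lra.
Qed.

Lemma mul_cosh_sub_sinh_nonneg y : 0 <= y -> 0 <= y * cosh y - sinh y.
Proof.
  intros Hy. enough (0 * cosh 0 - sinh 0 <= y * cosh y - sinh y) by (rewrite sinh_0 in *; lra).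
  apply (derive_nonneg_le (fun z => z * cosh z - sinh z) (fun z => z * sinh z)); [lra| |].
  - intros c _. unfold sinh, cosh. auto_derive; [easy | lra].
  - intros c Hc. pose proof (sinh_ge_id c). nra.
Qed.

Lemma mul_cosh_le_sinh_cubic y : 0 <= y -> 3 * y * cosh y <= (3 + y ^ 2) * sinh y.
Proof.
  intros Hy.
  enough ((3 + 0 ^ 2) * sinh 0 - 3 * 0 * cosh 0 <= (3 + y ^ 2) * sinh y - 3 * y * cosh y)
    by (rewrite sinh_0 in *; lra).
  apply (derive_nonneg_le (fun z => (3 + z ^ 2) * sinh z - 3 * z * cosh z)
           (fun z => z * (z * cosh z - sinh z))); [lra| |].
  - intros c _. unfold sinh, cosh. auto_derive; [easy | field].
  - intros c Hc. pose proof (mul_cosh_sub_sinh_nonneg c). nra.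
Qed.

Definition sinhc (y : R) : R := sinh y / y.

Lemma sinhc_ge_1 y : 0 < y -> 1 <= sinhc y.
Proof.
  intros Hy. unfold sinhc. pose proof (sinh_ge_id y).
  apply (Rmult_le_reg_r y); [lra|]. field_simplify; lra.
Qed.

Lemma sinhc_lt y : 0 < y -> sinhc y < exp y / (2 * y).
Proof.
  intros Hy. unfold sinhc, sinh. pose proof (exp_pos (- y)).
  apply (Rmult_lt_reg_r (2 * y)); [lra|]. field_simplify; lra.
Qed.

Lemma sinhc_le a b : 0 < a <= b -> sinhc a <= sinhc b.
Proof.
  intros Hab.
  apply (derive_nonneg_le sinhc (fun y => (y * cosh y - sinh y) / y ^ 2)); [lra| |].
  - intros c Hc. unfold sinhc, sinh, cosh. auto_derive; [lra | field; lra].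
  - intros c Hc. pose proof (mul_cosh_sub_sinh_nonneg c).
    apply Rmult_le_pos; [lra|]. left; apply Rinv_0_lt_compat, pow_lt; lra.
Qed.

Lemma sinhc_mul_exp_le a b : 0 < a <= b ->
  sinhc b * exp (- b ^ 2 / 6) <= sinhc a * exp (- a ^ 2 / 6).
Proof.
  intros Hab. enough (- (sinhc a * exp (- a ^ 2 / 6)) <= - (sinhc b * exp (- b ^ 2 / 6))) by lra.
  apply (derive_nonneg_le (fun y => - (sinhc y * exp (- y ^ 2 / 6)))
     (fun y => exp (- y ^ 2 / 6) * ((3 + y ^ 2) * sinh y - 3 * y * cosh y) / (3 * y ^ 2))); [lra| |].
  - intros c Hc. unfold sinhc, sinh, cosh. auto_derive; [lra |].
    replace (- (c * (c * 1)) * / 6) with (- c ^ 2 / 6) by (unfold Rdiv; ring).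
    field; lra.
  - intros c Hc. pose proof (mul_cosh_le_sinh_cubic c). pose proof (exp_pos (- c ^ 2 / 6)).
    apply Rmult_le_pos; [nra|]. left; apply Rinv_0_lt_compat; nra.
Qed.

Lemma one_sub_exp_opp v : 0 < v -> 1 - exp (- v) = v * exp (- (v / 2)) * sinhc (v / 2).
Proof.
  intros Hv. unfold sinhc, sinh.
  replace (exp (- v)) with (exp (- (v / 2)) * exp (- (v / 2))) by (rewrite <- exp_plus; f_equal; lra).
  rewrite exp_Ropp. pose proof (exp_pos (v / 2)). field. lra.
Qed.

Lemma ln_1p_le L : 0 <= L -> ln (1 + L) <= L - L ^ 2 / (2 * (1 + L)).
Proof.
  intros HL.
  assert (Hln : 0 <= ln (1 + L)) by (rewrite <- ln_1; apply ln_le; lra).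
  pose proof (sinh_ge_id _ Hln) as Hsinh. unfold sinh in Hsinh.
  rewrite exp_Ropp, exp_ln in Hsinh by lra.
  replace (L - L ^ 2 / (2 * (1 + L))) with ((1 + L - / (1 + L)) / 2) by (field; lra).
  exact Hsinh.
Qed.

Section SinhcRatio.
Variables L t s : R.
Hypotheses (Ht : 0 < t) (Hts : t < s) (HL : (s - t) / 2 < L) (HLts : t + s <= 2 * L).

(* Small gap: compare with the Gaussian factor exp (- y ^ 2 / 6), then use [ln_1p_le]. *)
Lemma one_add_lt_exp_sinhc_ratio_small_gap : s - t <= 3 ->
  1 + L < exp L * sinhc (t / 2) / sinhc (s / 2).
Proof.
  intros Hd.
  set (X := ((s / 2) ^ 2 - (t / 2) ^ 2) / 6).
  pose proof (sinhc_ge_1 (t / 2) ltac:(lra)). pose proof (sinhc_ge_1 (s / 2) ltac:(lra)).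
  assert (Hratio : exp (- X) <= sinhc (t / 2) / sinhc (s / 2)).
  { replace (- X) with (- (s / 2) ^ 2 / 6 - - (t / 2) ^ 2 / 6) by (unfold X; field).
    rewrite exp_sub.
    pose proof (sinhc_mul_exp_le (t / 2) (s / 2) ltac:(lra)).
    pose proof (exp_pos (- (s / 2) ^ 2 / 6)). pose proof (exp_pos (- (t / 2) ^ 2 / 6)).
    apply (Rmult_le_reg_r (exp (- (t / 2) ^ 2 / 6) * sinhc (s / 2))); [nra|].
    field_simplify; lra. }
  assert (HX : X < L ^ 2 / (2 * (1 + L))).
  { set (d := s - t) in *.
    assert (d * (1 + L) < 6 * L) by nra.
    assert (s ^ 2 - t ^ 2 <= 2 * d * L) by (unfold d; nra).
    apply (Rmult_lt_reg_r (24 * (1 + L))); [lra|].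
    replace (L ^ 2 / (2 * (1 + L)) * (24 * (1 + L))) with (12 * L ^ 2) by (field; lra).
    unfold X. nra. }
  pose proof (ln_1p_le L ltac:(lra)).
  apply Rlt_le_trans with (exp (L - X)).
  - rewrite <- (exp_ln (1 + L)) by lra. apply exp_increasing. lra.
  - rewrite Rminus_def, exp_plus. unfold Rdiv. rewrite Rmult_assoc.
    apply Rmult_le_compat_l; [left; apply exp_pos | exact Hratio].
Qed.

(* Large gap: [sinhc (s / 2) < exp (s / 2) / s] already suffices. *)
Lemma one_add_lt_exp_sinhc_ratio_large_gap : 3 < s - t ->
  1 + L < exp L * sinhc (t / 2) / sinhc (s / 2).
Proof.
  intros Hd.
  pose proof (sinhc_ge_1 (t / 2) ltac:(lra)) as Ht1.
  pose proof (sinhc_lt (s / 2) ltac:(lra)) as Hs.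
  replace (2 * (s / 2)) with s in Hs by field.
  pose proof (sinhc_ge_1 (s / 2) ltac:(lra)).
  pose proof (exp_pos L). pose proof (exp_pos (s / 2)).
  assert (Hlow : exp (L - s / 2) * s < exp L * sinhc (t / 2) / sinhc (s / 2)).
  { assert (s / exp (s / 2) < / sinhc (s / 2)).
    { replace (s / exp (s / 2)) with (/ (exp (s / 2) / s)) by (field; lra).
      apply Rinv_lt_contravar; [|lra]. apply Rmult_lt_0_compat; [lra|]. apply Rdiv_lt_0_compat; lra. }
    assert (/ sinhc (s / 2) <= sinhc (t / 2) / sinhc (s / 2)).
    { unfold Rdiv. rewrite <- (Rmult_1_l (/ sinhc (s / 2))) at 1.
      apply Rmult_le_compat_r; [left; apply Rinv_0_lt_compat|]; lra. }
    rewrite exp_sub. unfold Rdiv in *. rewrite Rmult_assoc, (Rmult_comm (/ _)), (Rmult_assoc (exp L)).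
    apply Rmult_lt_compat_l; lra. }
  set (u := (L - (s - t) / 2) / 2).
  assert (Hexp : 1 + u <= exp (L - s / 2)).
  { apply Rle_trans with (exp u); [apply exp_ineq1_le | apply exp_le; unfold u; lra]. }
  assert (1 + L <= (1 + u) * s) by (unfold u; nra).
  nra.
Qed.

End SinhcRatio.

Lemma one_add_lt_exp_sinhc_ratio L t s : 0 < t < s -> (s - t) / 2 < L -> t + s <= 2 * L ->
  1 + L < exp L * sinhc (t / 2) / sinhc (s / 2).
Proof.
  intros Hts HL HLts. destruct (Rle_lt_dec (s - t) 3).
  - apply one_add_lt_exp_sinhc_ratio_small_gap; lra.
  - apply one_add_lt_exp_sinhc_ratio_large_gap; lra.
Qed.

Lemma key_exp_ratio a s t : 0 < t <= a -> t < s ->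
  t * (1 + (a + (s - t) / 2)) < exp a * (1 - exp (- t)) / (1 - exp (- s)) * s.
Proof.
  intros Hta Hts.
  rewrite (one_sub_exp_opp t), (one_sub_exp_opp s) by lra.
  pose proof (sinhc_ge_1 (t / 2) ltac:(lra)). pose proof (sinhc_ge_1 (s / 2) ltac:(lra)).
  pose proof (exp_pos (- (t / 2))). pose proof (exp_pos (- (s / 2))).
  replace (exp a * (t * exp (- (t / 2)) * sinhc (t / 2)) / (s * exp (- (s / 2)) * sinhc (s / 2)) * s)
    with (t * (exp (a + (s - t) / 2) * sinhc (t / 2) / sinhc (s / 2))).
  - apply Rmult_lt_compat_l; [lra|]. apply one_add_lt_exp_sinhc_ratio; lra.
  - replace (a + (s - t) / 2) with (a + - (t / 2) - - (s / 2)) by field.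
    rewrite exp_sub, exp_plus. field. lra.
Qed.

Lemma one_sub_exp_ratio_le u v : 0 < u < v ->
  (1 - exp (- u)) / (1 - exp (- v)) <= u / v * exp ((v - u) / 2).
Proof.
  intros Huv.
  rewrite (one_sub_exp_opp u), (one_sub_exp_opp v) by lra.
  pose proof (sinhc_ge_1 (u / 2) ltac:(lra)). pose proof (sinhc_le (u / 2) (v / 2) ltac:(lra)).
  pose proof (exp_pos (- (u / 2))). pose proof (exp_pos (- (v / 2))).
  replace ((v - u) / 2) with (- (u / 2) - - (v / 2)) by field. rewrite exp_sub.
  apply (Rmult_le_reg_r (v * exp (- (v / 2)) * sinhc (v / 2) / (u * exp (- (u / 2))))).
  { apply Rdiv_lt_0_compat; apply Rmult_lt_0_compat; nra. }
  field_simplify; lra.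
Qed.

(** * Means in logarithmic coordinates *)

Lemma Rpower_ln_div x y : 0 < y -> ln x <> 0 -> Rpower x (ln y / ln x) = y.
Proof.
  intros Hy Hx. unfold Rpower.
  replace (ln y / ln x * ln x) with (ln y) by (field; exact Hx). apply exp_ln, Hy.
Qed.

Lemma ln_pos x : 1 < x -> 0 < ln x.
Proof. intros Hx. rewrite <- ln_1. apply ln_increasing; lra. Qed.

Lemma one_lt_div x y : 0 < y < x -> 1 < x / y.
Proof. intros Hxy. apply (Rmult_lt_reg_r y); [lra|]. field_simplify; lra. Qed.

Lemma lt_Rpower_self x y : 1 < x -> 1 < y -> x < Rpower x y.
Proof. intros Hx Hy. rewrite <- (Rpower_1 x) at 1 by lra. apply Rpower_lt; lra. Qed.

Lemma Rpower_lt_self x y : 1 < x -> y < 1 -> Rpower x y < x.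
Proof. intros Hx Hy. rewrite <- (Rpower_1 x) at 2 by lra. apply Rpower_lt; lra. Qed.

Section MeanRatios.
Variables A G A' G' : R.
Hypotheses (HG : 0 < G < A) (HG' : 0 < G' < A') (HAG' : A <= G') (Hfan : A' / G' < A / G).

Lemma ln_sqrt_means_ratio : ln (sqrt (A' * G' / (A * G))) = ln (A' / A) + (ln (A / G) - ln (A' / G')) / 2.
Proof.
  rewrite <- Rpower_sqrt by (apply Rdiv_lt_0_compat; apply Rmult_lt_0_compat; lra).
  unfold Rpower. rewrite ln_exp, !ln_div, !ln_mult by nra. field.
Qed.

Lemma key_means_ineq :
  ln (A' / G') * (1 + ln (sqrt (A' * G' / (A * G)))) < (A' - G') / (A - G) * ln (A / G).
Proof.
  rewrite ln_sqrt_means_ratio.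
  set (s := ln (A / G)). set (t := ln (A' / G')). set (a := ln (A' / A)).
  assert (Ht : 0 < t) by (apply ln_pos, one_lt_div; lra).
  assert (Hts : t < s) by (apply ln_increasing; [apply Rdiv_lt_0_compat|]; lra).
  assert (Hta : t <= a).
  { apply ln_le; [apply Rdiv_lt_0_compat; lra|].
    apply Rmult_le_compat_l; [lra|]. apply Rinv_le_contravar; lra. }
  replace ((A' - G') / (A - G)) with (exp a * (1 - exp (- t)) / (1 - exp (- s))).
  2:{ unfold s, t, a. rewrite !exp_Ropp, !exp_ln by (apply Rdiv_lt_0_compat; lra).
      field. repeat split; lra. }
  apply key_exp_ratio; lra.
Qed.

Hypothesis Halzer : A' - G' < A - G.

Lemma means_exponent_bounds :
  let r := ln (A' / G') / ln (A / G) in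
  let L := ln (sqrt (A' * G' / (A * G))) in
  let k := (A' - G') / (A - G) in
  0 < r /\ 0 < ln (A' / A) < L /\ 0 < k < 1 /\ r * (1 + L) < k.
Proof.
  intros r L k.
  assert (Hs : 0 < ln (A / G)) by (apply ln_pos, one_lt_div; lra).
  assert (Ht : 0 < ln (A' / G')) by (apply ln_pos, one_lt_div; lra).
  assert (Hk : 0 < k < 1).
  { unfold k. split; [apply Rdiv_lt_0_compat; lra|].
    apply (Rmult_lt_reg_r (A - G)); [lra|]. field_simplify; lra. }
  assert (Hts : ln (A' / G') < ln (A / G)) by (apply ln_increasing; [apply Rdiv_lt_0_compat|]; lra).
  pose proof key_means_ineq as Hkey. fold L k in Hkey.
  repeat split; try lra.
  - apply Rdiv_lt_0_compat; lra.
  - apply ln_pos, one_lt_div; lra.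
  - unfold L. rewrite ln_sqrt_means_ratio. lra.
  - unfold r. apply (Rmult_lt_reg_r (ln (A / G))); [lra|]. field_simplify; lra.
Qed.

Lemma means_chain_AG :
  let r := ln (A' / G') / ln (A / G) in
  let L := ln (sqrt (A' * G' / (A * G))) in
  A' / G' < Rpower (A / G) ((A' - G') / (A - G) - r * L) /\
  Rpower (A / G) ((A' - G') / (A - G) - r * L)
    < Rpower (A / G) ((A' - G') / (A - G) - r * ln (A' / A)) /\
  Rpower (A / G) ((A' - G') / (A - G) - r * ln (A' / A))
    < Rpower (A / G) (1 - r * ln (A' / A)) /\
  Rpower (A / G) (1 - r * ln (A' / A)) < A / G.
Proof.
  intros r L.
  destruct means_exponent_bounds as (Hr & Ha & Hk & Hkey). fold r L in Hr, Ha, Hkey.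
  assert (HAG : 1 < A / G) by (apply one_lt_div; lra).
  assert (Hr_pow : A' / G' = Rpower (A / G) r).
  { symmetry. apply Rpower_ln_div; [apply Rdiv_lt_0_compat; lra | apply Rgt_not_eq, ln_pos, HAG]. }
  rewrite Hr_pow at 1.
  repeat split; try apply Rpower_lt_self; try apply Rpower_lt; nra.
Qed.

Lemma means_chain_A'G' :
  let L := ln (sqrt (A' * G' / (A * G))) in
  A' / G' < Rmax (Rpower (A' / G') (1 + L)) (Rpower (A' / G') ((A - G) / (A' - G'))) /\
  Rmax (Rpower (A' / G') (1 + L)) (Rpower (A' / G') ((A - G) / (A' - G')))
    < Rpower (A' / G') ((1 + L) * ((A - G) / (A' - G'))) /\
  Rpower (A' / G') ((1 + L) * ((A - G) / (A' - G'))) < A / G.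
Proof.
  intros L.
  destruct means_exponent_bounds as (Hr & Ha & Hk & Hkey). fold L in Ha, Hkey.
  set (k := (A' - G') / (A - G)) in *.
  replace ((A - G) / (A' - G')) with (/ k) by (unfold k; field; lra).
  assert (HA'G' : 1 < A' / G') by (apply one_lt_div; lra).
  assert (Hkinv : 1 < / k) by (rewrite <- Rinv_1; apply Rinv_lt_contravar; lra).
  assert (Hs_pow : A / G = Rpower (A' / G') (ln (A / G) / ln (A' / G'))).
  { symmetry. apply Rpower_ln_div; [apply Rdiv_lt_0_compat; lra | apply Rgt_not_eq, ln_pos, HA'G']. }
  repeat split.
  - apply Rlt_le_trans with (Rpower (A' / G') (1 + L)); [apply lt_Rpower_self; lra | apply Rmax_l].
  - apply Rmax_lub_lt; apply Rpower_lt; nra.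
  - rewrite Hs_pow. apply Rpower_lt; [exact HA'G'|].
    assert (Hs : 0 < ln (A / G)) by (apply ln_pos, one_lt_div; lra).
    set (s := ln (A / G)) in *. set (t := ln (A' / G')) in *.
    assert (Ht : 0 < t) by (apply ln_pos, HA'G').
    apply (Rmult_lt_compat_r s) in Hkey; [|lra].
    replace (t / s * (1 + L) * s) with (t * (1 + L)) in Hkey by (field; lra).
    apply (Rmult_lt_reg_r (k * t)); [nra|].
    replace ((1 + L) * / k * (k * t)) with (t * (1 + L)) by (field; lra).
    replace (s / t * (k * t)) with (k * s) by (field; lra).
    lra.
Qed.

End MeanRatios.

Lemma ratio_pow_exp x y n : 0 < y -> 0 < x -> (y / x) ^ n = exp (- (INR n * ln (x / y))).
Proof.
  intros Hy Hx. rewrite <- Rpower_pow by (apply Rdiv_lt_0_compat; lra).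
  unfold Rpower. f_equal. rewrite !ln_div by lra. ring.
Qed.

Lemma means_power_ineq n A G A' G' : (1 <= n)%nat ->
  0 < G < A -> 0 < G' < A' -> A <= A' -> A' / G' < A / G ->
  (A' ^ n - G' ^ n) / (A ^ n - G ^ n)
    < (A' ^ n * G' ^ n * ln (A' / G')) / (A ^ n * G ^ n * ln (A / G)).
Proof.
  intros Hn HG HG' HAA' Hfan.
  assert (HN : 1 <= INR n) by (apply (le_INR 1); exact Hn).
  assert (Hs : 0 < ln (A / G)) by (apply ln_pos, one_lt_div; lra).
  assert (Ht : 0 < ln (A' / G')) by (apply ln_pos, one_lt_div; lra).
  assert (Hts : ln (A' / G') < ln (A / G)) by (apply ln_increasing; [apply Rdiv_lt_0_compat|]; lra).
  replace (G ^ n) with (A ^ n * (G / A) ^ n) by (rewrite <- Rpow_mult_distr; f_equal; field; lra).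
  replace (G' ^ n) with (A' ^ n * (G' / A') ^ n) by (rewrite <- Rpow_mult_distr; f_equal; field; lra).
  rewrite !ratio_pow_exp by lra.
  set (s := ln (A / G)) in *. set (t := ln (A' / G')) in *. set (N := INR n) in *.
  assert (Hratio : (1 - exp (- (N * t))) / (1 - exp (- (N * s)))
                   < t / s * (exp (- (N * t)) / exp (- (N * s)))).
  { apply Rle_lt_trans with (N * t / (N * s) * exp ((N * s - N * t) / 2)).
    - apply one_sub_exp_ratio_le; nra.
    - replace (N * t / (N * s)) with (t / s) by (field; lra).
      rewrite <- exp_sub.
      apply Rmult_lt_compat_l; [apply Rdiv_lt_0_compat; lra|].
      apply exp_increasing. nra. }
  set (P := A ^ n). set (P' := A' ^ n).
  assert (HP : 0 < P) by (apply pow_lt; lra).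
  assert (HPP' : P <= P') by (apply pow_incr; lra).
  set (u := exp (- (N * s))) in *. set (u' := exp (- (N * t))) in *.
  assert (Hu : 0 < u < 1) by (split; [apply exp_pos | rewrite <- exp_0; apply exp_increasing; nra]).
  assert (Hu' : 0 < u') by apply exp_pos.
  replace ((P' - P' * u') / (P - P * u)) with (P' / P * ((1 - u') / (1 - u))) by (field; split; nra).
  replace (P' * (P' * u') * t / (P * (P * u) * s)) with ((P' / P) * (P' / P) * (t / s * (u' / u)))
    by (field; repeat split; nra).
  assert (1 <= P' / P) by (apply (Rmult_le_reg_r P); [lra|]; field_simplify; lra).
  assert (0 < t / s * (u' / u)) by (apply Rmult_lt_0_compat; apply Rdiv_lt_0_compat; lra).
  apply Rlt_le_trans with (P' / P * (t / s * (u' / u))).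
  - apply Rmult_lt_compat_l; lra.
  - rewrite Rmult_assoc. apply Rmult_le_compat_l; nra.
Qed.

(** * Arithmetic means and Jensen's inequality *)

Lemma rsum_ext n f g : (forall i, (i < n)%nat -> f i = g i) -> rsum n f = rsum n g.
Proof.
  induction n as [|n IH]; intros Hfg; simpl; [reflexivity|].
  rewrite IH, Hfg; [reflexivity | lia | intros i Hi; apply Hfg; lia].
Qed.

Lemma rsum_plus n f g : rsum n (fun i => f i + g i) = rsum n f + rsum n g.
Proof. induction n as [|n IH]; simpl; [lra|]. rewrite IH. ring. Qed.

Lemma rsum_scal n c f : rsum n (fun i => c * f i) = c * rsum n f.
Proof. induction n as [|n IH]; simpl; [lra|]. rewrite IH. ring. Qed.

Lemma rsum_const n c : rsum n (fun _ => c) = INR n * c.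
Proof. induction n as [|n IH]; simpl rsum; [simpl; lra|]. rewrite IH, S_INR. ring. Qed.

Lemma rsum_le n f g : (forall i, (i < n)%nat -> f i <= g i) -> rsum n f <= rsum n g.
Proof.
  induction n as [|n IH]; intros Hfg; simpl; [lra|].
  pose proof (IH (fun i Hi => Hfg i ltac:(lia))). pose proof (Hfg n ltac:(lia)). lra.
Qed.

Lemma rsum_lt n f g k : (k < n)%nat -> (forall i, (i < n)%nat -> f i <= g i) -> f k < g k ->
  rsum n f < rsum n g.
Proof.
  induction n as [|n IH]; intros Hk Hfg Hfgk; [lia|]. simpl.
  destruct (Nat.eq_dec k n) as [->|Hne].
  - pose proof (rsum_le n f g (fun i Hi => Hfg i ltac:(lia))). lra.
  - pose proof (IH ltac:(lia) (fun i Hi => Hfg i ltac:(lia)) Hfgk). pose proof (Hfg n ltac:(lia)). lra.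
Qed.

Lemma rprod_pos n f : (forall i, (i < n)%nat -> 0 < f i) -> 0 < rprod n f.
Proof.
  induction n as [|n IH]; intros Hf; simpl; [lra|].
  apply Rmult_lt_0_compat; [apply IH; intros; apply Hf|apply Hf]; lia.
Qed.

Lemma ln_rprod n f : (forall i, (i < n)%nat -> 0 < f i) -> ln (rprod n f) = rsum n (fun i => ln (f i)).
Proof.
  induction n as [|n IH]; intros Hf; simpl; [apply ln_1|].
  rewrite ln_mult, IH; [reflexivity | intros; apply Hf; lia | apply rprod_pos; intros; apply Hf; lia | apply Hf; lia].
Qed.

Lemma is_derive_rsum n (F : nat -> R -> R) (F' : nat -> R) y :
  (forall i, (i < n)%nat -> is_derive (F i) y (F' i)) ->
  is_derive (fun z => rsum n (fun i => F i z)) y (rsum n F').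
Proof.
  induction n as [|n IH]; intros HF; simpl.
  - apply is_derive_Reals, derivable_pt_lim_const.
  - apply (is_derive_plus (fun z => rsum n (fun i => F i z)) (F n)); [apply IH; intros i Hi|]; apply HF; lia.
Qed.

Definition nonconstant (n : nat) (f : nat -> R) : Prop :=
  exists i j, (i < n)%nat /\ (j < n)%nat /\ f i <> f j.

Lemma nonconstant_exists_ne n f c : nonconstant n f -> exists k, (k < n)%nat /\ f k <> c.
Proof.
  intros (i & j & Hi & Hj & Hij).
  destruct (Req_dec (f i) c) as [Hic|Hic]; [exists j; split; [exact Hj | congruence] | exists i; auto].
Qed.

Lemma tangent_lt_of_derive_incr (D : R -> Prop) (f f' : R -> R) c y :
  (forall a b z, D a -> D b -> a <= z <= b -> D z) ->
  (forall z, D z -> is_derive f z (f' z)) ->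
  (forall a b, D a -> D b -> a < b -> f' a < f' b) ->
  D c -> D y -> y <> c -> f c + f' c * (y - c) < f y.
Proof.
  intros HD Hf Hf' Hc Hy Hyc.
  assert (Hmvt : forall a b, D a -> D b -> a < b -> exists z, f b - f a = f' z * (b - a) /\ a < z < b).
  { intros a b Ha Hb Hab. apply (MVT_cor2 f f' a b Hab).
    intros z Hz. apply is_derive_Reals, Hf, (HD a b z); auto. }
  destruct (Rlt_or_le c y) as [Hlt|Hle].
  - destruct (Hmvt c y Hc Hy Hlt) as (z & Hz & Hcz).
    pose proof (Hf' c z Hc (HD c y z Hc Hy ltac:(lra)) (proj1 Hcz)). nra.
  - destruct (Hmvt y c Hy Hc ltac:(lra)) as (z & Hz & Hyz).
    pose proof (Hf' z c (HD y c z Hy Hc ltac:(lra)) Hc (proj2 Hyz)). nra.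
Qed.

Section ArithmeticMean.
Variable n : nat.
Hypothesis Hn : (1 <= n)%nat.

Lemma INR_pos : 0 < INR n.
Proof. apply lt_0_INR. lia. Qed.

Lemma AM_ext f g : (forall i, (i < n)%nat -> f i = g i) -> AM n f = AM n g.
Proof. intros Hfg. unfold AM. rewrite (rsum_ext n f g Hfg). reflexivity. Qed.

Lemma AM_plus f g : AM n (fun i => f i + g i) = AM n f + AM n g.
Proof. unfold AM. rewrite rsum_plus. field. apply Rgt_not_eq, INR_pos. Qed.

Lemma AM_scal c f : AM n (fun i => c * f i) = c * AM n f.
Proof. unfold AM. rewrite rsum_scal. field. apply Rgt_not_eq, INR_pos. Qed.

Lemma AM_const c : AM n (fun _ => c) = c.
Proof. unfold AM. rewrite rsum_const. field. apply Rgt_not_eq, INR_pos. Qed.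

Lemma AM_le f g : (forall i, (i < n)%nat -> f i <= g i) -> AM n f <= AM n g.
Proof.
  intros Hfg. unfold AM, Rdiv.
  apply Rmult_le_compat_r; [left; apply Rinv_0_lt_compat, INR_pos | apply rsum_le, Hfg].
Qed.

Lemma AM_lt f g k : (k < n)%nat -> (forall i, (i < n)%nat -> f i <= g i) -> f k < g k ->
  AM n f < AM n g.
Proof.
  intros Hk Hfg Hfgk. unfold AM, Rdiv.
  apply Rmult_lt_compat_r; [apply Rinv_0_lt_compat, INR_pos | apply (rsum_lt n f g k Hk Hfg Hfgk)].
Qed.

Lemma AM_pos f k : (k < n)%nat -> (forall i, (i < n)%nat -> 0 <= f i) -> 0 < f k -> 0 < AM n f.
Proof. intros Hk Hf Hfk. rewrite <- (AM_const 0). exact (AM_lt _ f k Hk Hf Hfk). Qed.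

Lemma GM_pos f : 0 < GM n f.
Proof. apply exp_pos. Qed.

Lemma GM_eq_exp f : (forall i, (i < n)%nat -> 0 < f i) -> GM n f = exp (AM n (fun i => ln (f i))).
Proof.
  intros Hf. unfold GM, Rpower, AM. rewrite ln_rprod by exact Hf. f_equal.
  field. apply Rgt_not_eq, INR_pos.
Qed.

Lemma is_derive_AM (F : nat -> R -> R) (F' : nat -> R) y :
  (forall i, (i < n)%nat -> is_derive (F i) y (F' i)) ->
  is_derive (fun z => AM n (fun i => F i z)) y (AM n F').
Proof.
  intros HF. unfold AM. pose proof (is_derive_rsum n F F' y HF) as Hsum.
  (* [auto_derive] cannot differentiate under the binder of [rsum]. *)
  set (S := fun z => rsum n (fun i => F i z)).
  change (is_derive (fun z => S z / INR n) y (rsum n F' / INR n)).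
  auto_derive.
  - exists (rsum n F'). exact Hsum.
  - replace (Derive (fun z => S z) y) with (rsum n F') by (symmetry; apply is_derive_unique, Hsum).
    field. apply Rgt_not_eq, INR_pos.
Qed.

Lemma AM_cubic_pos w : (forall i, (i < n)%nat -> 0 <= w i) -> nonconstant n w ->
  0 < 2 * AM n (fun i => w i ^ 3) - 3 * AM n w * AM n (fun i => w i ^ 2) + AM n w ^ 3.
Proof.
  intros Hw Hnc. set (mu := AM n w).
  assert (Hmu : 0 <= mu) by (rewrite <- (AM_const 0); apply AM_le; auto).
  destruct (nonconstant_exists_ne n w mu Hnc) as (k & Hk & Hwk).
  replace (2 * AM n (fun i => w i ^ 3) - 3 * mu * AM n (fun i => w i ^ 2) + mu ^ 3)
    with (AM n (fun i => (w i - mu) ^ 2 * (mu + 2 * w i))).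
  2:{ rewrite (AM_ext _ (fun i => 2 * w i ^ 3 + -3 * mu * w i ^ 2 + mu ^ 3)) by (intros; ring).
      rewrite !AM_plus, !AM_scal, AM_const. ring. }
  apply (AM_pos _ k Hk).
  - intros i Hi. pose proof (Hw i Hi). apply Rmult_le_pos; [apply pow2_ge_0 | lra].
  - pose proof (Hw k Hk). apply Rmult_lt_0_compat.
    + replace ((w k - mu) ^ 2) with (Rsqr (w k - mu)) by (unfold Rsqr; ring).
      apply Rsqr_pos_lt. intros Heq. apply Hwk. lra.
    + destruct (Req_dec mu 0); lra.
Qed.

Lemma AM_lt_of_tangent (h : R -> R) m x : nonconstant n x ->
  (forall i, (i < n)%nat -> x i <> AM n x -> h (AM n x) + m * (x i - AM n x) < h (x i)) ->
  h (AM n x) < AM n (fun i => h (x i)).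
Proof.
  intros Hnc Htan. set (c := AM n x) in *.
  destruct (nonconstant_exists_ne n x c Hnc) as (k & Hk & Hxk).
  apply Rle_lt_trans with (AM n (fun i => h c + m * (x i - c))).
  - rewrite (AM_ext _ (fun i => h c - m * c + m * x i)) by (intros; ring).
    rewrite AM_plus, AM_scal, AM_const. fold c. lra.
  - apply (AM_lt _ _ k Hk); [|exact (Htan k Hk Hxk)].
    intros i Hi. destruct (Req_dec (x i) c) as [->|Hxi]; [lra | left; exact (Htan i Hi Hxi)].
Qed.

Lemma jensen_strict (D : R -> Prop) (f f' : R -> R) x :
  (forall a b z, D a -> D b -> a <= z <= b -> D z) ->
  (forall z, D z -> is_derive f z (f' z)) ->
  (forall a b, D a -> D b -> a < b -> f' a < f' b) ->
  (forall i, (i < n)%nat -> D (x i)) -> D (AM n x) -> nonconstant n x ->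
  f (AM n x) < AM n (fun i => f (x i)).
Proof.
  intros HD Hf Hf' Hx HA Hnc.
  apply (AM_lt_of_tangent f (f' (AM n x)) x Hnc).
  intros i Hi Hne. exact (tangent_lt_of_derive_incr D f f' _ _ HD Hf Hf' HA (Hx i Hi) Hne).
Qed.

Lemma GM_lt_AM y : (forall i, (i < n)%nat -> 0 < y i) -> nonconstant n y -> GM n y < AM n y.
Proof.
  intros Hy Hnc.
  assert (HA : 0 < AM n y) by (apply (AM_pos y 0); [lia | intros i Hi; left; auto | apply Hy; lia]).
  pose proof (jensen_strict (fun z => 0 < z) (fun z => - ln z) (fun z => - / z) y) as Hj.
  cbv beta in Hj.
  rewrite (AM_ext (fun i => - ln (y i)) (fun i => -1 * ln (y i))), AM_scal in Hj
    by (intros; ring).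
  rewrite GM_eq_exp by auto. rewrite <- (exp_ln (AM n y)) by exact HA.
  apply exp_increasing.
  enough (- ln (AM n y) < -1 * AM n (fun i => ln (y i))) by lra.
  apply Hj; auto.
  - intros a b z Ha _ Hz. lra.
  - intros z Hz. auto_derive; [lra | field; lra].
  - intros a b Ha Hb Hab. apply Ropp_lt_contravar, Rinv_lt_contravar; nra.
Qed.

End ArithmeticMean.

(** * Alzer's inequality *)

(* [f''] decreases, so [f' y + f' (-y) < 2 f' 0] for [y > 0]: this is the derivative of
   [y |-> f (-y) - f y + 2 y f' 0]. *)
Lemma odd_part_pos_of_third_derive_neg (f f1 f2 f3 : R -> R) h : 0 < h ->
  (forall y, -h <= y <= h -> is_derive f y (f1 y)) ->
  (forall y, -h <= y <= h -> is_derive f1 y (f2 y)) ->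
  (forall y, -h <= y <= h -> is_derive f2 y (f3 y)) ->
  (forall y, -h < y < h -> f3 y < 0) ->
  0 < f (- h) - f h + 2 * h * f1 0.
Proof.
  intros Hh Hf Hf1 Hf2 Hf3.
  assert (Hf2_decr : forall u v, -h <= u -> u < v -> v <= h -> f2 v < f2 u).
  { intros u v Hu Huv Hv. enough (- f2 u < - f2 v) by lra.
    apply (derive_pos_lt (fun y => - f2 y) (fun y => - f3 y)); [lra| |].
    - intros c Hc. auto_derive; [eexists; apply Hf2; lra|].
      rewrite (Derive_eta_unique _ _ _ (Hf2 c ltac:(lra))). ring.
    - intros c Hc. pose proof (Hf3 c ltac:(lra)). lra. }
  assert (Hf1_sym : forall y, 0 < y <= h -> f1 y + f1 (- y) < 2 * f1 0).
  { intros y Hy.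
    enough (2 * f1 0 - f1 0 - f1 (- 0) < 2 * f1 0 - f1 y - f1 (- y)) by (rewrite Ropp_0 in *; lra).
    apply (derive_pos_lt (fun z => 2 * f1 0 - f1 z - f1 (- z)) (fun z => f2 (- z) - f2 z)); [lra| |].
    - intros c Hc. auto_derive; [repeat apply conj; try exact I; eexists; apply Hf1; lra|].
      rewrite (Derive_eta_unique _ _ _ (Hf1 c ltac:(lra))), (Derive_eta_unique _ _ _ (Hf1 (- c) ltac:(lra))).
      ring.
    - intros c Hc. pose proof (Hf2_decr (- c) c ltac:(lra) ltac:(lra) ltac:(lra)). lra. }
  enough (f (- 0) - f 0 + 2 * 0 * f1 0 < f (- h) - f h + 2 * h * f1 0) by (rewrite Ropp_0 in *; lra).
  apply (derive_pos_lt (fun y => f (- y) - f y + 2 * y * f1 0)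
           (fun y => 2 * f1 0 - f1 y - f1 (- y))); [lra | |].
  - intros c Hc. auto_derive; [repeat apply conj; try exact I; eexists; apply Hf; lra|].
    rewrite (Derive_eta_unique _ _ _ (Hf c ltac:(lra))), (Derive_eta_unique _ _ _ (Hf (- c) ltac:(lra))).
    ring.
  - intros c Hc. pose proof (Hf1_sym c ltac:(lra)). lra.
Qed.

Section Alzer.
Variable n : nat.
Variable e : nat -> R.
Hypothesis Hn : (1 <= n)%nat.
Hypothesis He : forall i, (i < n)%nat -> 0 <= e i < 1/2.

Lemma alzer_base_pos i y : (i < n)%nat -> -1 <= y <= 1 -> 0 < 1/2 - y * e i.
Proof. intros Hi Hy. pose proof (He i Hi). nra. Qed.

(* [zeta y] is the geometric mean of the numbers [1/2 - y e_i] (for [e_i = 1/2 - x_i] it is [G] at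
   [y = 1] and [G'] at [y = -1]); its derivatives are polynomials in the moments of the weights
   [e_i / (1/2 - y e_i) = - d/dy ln (1/2 - y e_i)]. *)
Definition weight i y := e i / (1/2 - y * e i).
Definition moment k y := AM n (fun i => weight i y ^ k).
Definition log_zeta y := AM n (fun i => ln (1/2 - y * e i)).
Definition zeta y := exp (log_zeta y).

Lemma is_derive_weight_pow k i y : (i < n)%nat -> -1 <= y <= 1 ->
  is_derive (fun z => weight i z ^ k) y (INR k * weight i y ^ S k).
Proof.
  intros Hi Hy. pose proof (alzer_base_pos i y Hi Hy). unfold weight.
  auto_derive; [lra|]. destruct k as [|k]; [simpl; ring|].
  unfold Rdiv, Rminus. cbn [pow Nat.pred]. field. lra.
Qed.

Lemma is_derive_moment k y : -1 <= y <= 1 -> is_derive (moment k) y (INR k * moment (S k) y).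
Proof.
  intros Hy. unfold moment. rewrite <- AM_scal by exact Hn.
  apply (is_derive_AM n Hn (fun i z => weight i z ^ k)).
  intros i Hi. apply is_derive_weight_pow; assumption.
Qed.

Lemma is_derive_log_zeta y : -1 <= y <= 1 -> is_derive log_zeta y (- moment 1 y).
Proof.
  intros Hy.
  assert (Hm : moment 1 y = AM n (fun i => e i / (1/2 - y * e i))).
  { apply AM_ext. intros i Hi. unfold weight. ring. }
  replace (- moment 1 y) with (AM n (fun i => -1 * (e i / (1/2 - y * e i))))
    by (rewrite AM_scal, Hm by exact Hn; ring).
  apply (is_derive_AM n Hn (fun i z => ln (1/2 - z * e i))).
  intros i Hi. pose proof (alzer_base_pos i y Hi Hy). auto_derive; [lra | field; lra].
Qed.

Lemma is_derive_zeta y : -1 <= y <= 1 -> is_derive zeta y (- zeta y * moment 1 y).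
Proof.
  intros Hy. unfold zeta. auto_derive; [eexists; apply is_derive_log_zeta, Hy|].
  rewrite (Derive_eta_unique _ _ _ (is_derive_log_zeta y Hy)). ring.
Qed.

Lemma is_derive_zeta_1 y : -1 <= y <= 1 ->
  is_derive (fun z => - zeta z * moment 1 z) y (zeta y * (moment 1 y ^ 2 - moment 2 y)).
Proof.
  intros Hy. auto_derive.
  - split; [eexists; apply is_derive_zeta, Hy | split; [eexists; apply is_derive_moment, Hy | exact I]].
  - rewrite (Derive_eta_unique _ _ _ (is_derive_zeta y Hy)),
            (Derive_eta_unique _ _ _ (is_derive_moment 1 y Hy)).
    simpl INR. ring.
Qed.

Lemma is_derive_zeta_2 y : -1 <= y <= 1 ->
  is_derive (fun z => zeta z * (moment 1 z ^ 2 - moment 2 z)) y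
    (zeta y * (3 * moment 1 y * moment 2 y - moment 1 y ^ 3 - 2 * moment 3 y)).
Proof.
  intros Hy. auto_derive.
  - split; [eexists; apply is_derive_zeta, Hy|].
    split; [eexists; apply is_derive_moment, Hy|].
    split; [eexists; apply is_derive_moment, Hy | exact I].
  - rewrite (Derive_eta_unique _ _ _ (is_derive_zeta y Hy)),
            (Derive_eta_unique _ _ _ (is_derive_moment 1 y Hy)),
            (Derive_eta_unique _ _ _ (is_derive_moment 2 y Hy)).
    simpl INR. ring.
Qed.

Lemma zeta_third_derive_neg y : -1 <= y <= 1 -> nonconstant n e ->
  zeta y * (3 * moment 1 y * moment 2 y - moment 1 y ^ 3 - 2 * moment 3 y) < 0.
Proof.
  intros Hy (i & j & Hi & Hj & Hij).
  assert (Hw : forall k, (k < n)%nat -> 0 <= weight k y).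
  { intros k Hk. pose proof (He k Hk). pose proof (alzer_base_pos k y Hk Hy).
    apply Rmult_le_pos; [lra | left; apply Rinv_0_lt_compat; lra]. }
  assert (Hnc : nonconstant n (fun k => weight k y)).
  { exists i, j. repeat split; auto. unfold weight. intros Heq. apply Hij.
    pose proof (alzer_base_pos i y Hi Hy). pose proof (alzer_base_pos j y Hj Hy).
    apply (Rmult_eq_compat_r ((1/2 - y * e i) * (1/2 - y * e j))) in Heq.
    field_simplify in Heq; lra. }
  pose proof (AM_cubic_pos n Hn _ Hw Hnc) as Hcubic.
  replace (AM n (fun k => weight k y)) with (moment 1 y) in Hcubic
    by (apply AM_ext; intros; apply pow_1).
  pose proof (exp_pos (log_zeta y)). unfold zeta. fold (moment 2 y) (moment 3 y) in Hcubic. nra.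
Qed.

Lemma alzer_zeta : nonconstant n e -> 0 < zeta (-1) - zeta 1 - 2 * zeta 0 * moment 1 0.
Proof.
  intros Hnc.
  pose proof (odd_part_pos_of_third_derive_neg zeta (fun z => - zeta z * moment 1 z)
    (fun z => zeta z * (moment 1 z ^ 2 - moment 2 z))
    (fun z => zeta z * (3 * moment 1 z * moment 2 z - moment 1 z ^ 3 - 2 * moment 3 z)) 1)
    as Hodd.
  replace (- 1) with (-1) in Hodd by ring.
  enough (0 < zeta (-1) - zeta 1 + 2 * 1 * (- zeta 0 * moment 1 0)) by lra.
  apply Hodd; [lra | intros y Hy .. ].
  - apply is_derive_zeta; lra.
  - apply is_derive_zeta_1; lra.
  - apply is_derive_zeta_2; lra.
  - apply zeta_third_derive_neg; [lra | exact Hnc].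
Qed.

End Alzer.

(** * Means of x and 1 - x *)

Section ComplementaryMeans.
Variable n : nat.
Variable x : nat -> R.
Hypothesis Hn : (1 <= n)%nat.
Hypothesis Hx : forall i, (i < n)%nat -> 0 < x i <= 1/2.

Lemma AM'_eq : AM' n x = 1 - AM n x.
Proof.
  unfold AM'. rewrite (AM_ext n _ (fun i => 1 + -1 * x i)) by (intros; ring).
  rewrite AM_plus, AM_const, AM_scal by exact Hn. ring.
Qed.

Lemma AM_bounds : 0 < AM n x <= 1/2.
Proof.
  split.
  - apply (AM_pos n Hn x 0); [lia | intros i Hi; left | ]; apply Hx; lia.
  - rewrite <- (AM_const n Hn (1/2)). apply AM_le; [exact Hn|]. intros i Hi; apply Hx, Hi.
Qed.

Lemma GM'_eq_exp : GM' n x = exp (AM n (fun i => ln (1 - x i))).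
Proof. apply GM_eq_exp; [exact Hn|]. intros i Hi. pose proof (Hx i Hi). lra. Qed.

Lemma ky_fan : nonconstant n x -> AM' n x / GM' n x < AM n x / GM n x.
Proof.
  intros Hnc. pose proof AM_bounds as HA.
  pose proof (jensen_strict n Hn (fun z => 0 < z <= 1/2) (fun z => ln (1 - z) - ln z)
                (fun z => - / (z * (1 - z))) x) as Hj.
  cbv beta in Hj.
  rewrite (AM_ext n (fun i => ln (1 - x i) - ln (x i)) (fun i => ln (1 - x i) + -1 * ln (x i))),
    AM_plus, AM_scal in Hj
    by (auto; intros; ring).
  rewrite AM'_eq, GM'_eq_exp, GM_eq_exp by (auto; intros i Hi; apply Hx, Hi).
  apply ln_lt_inv; try (apply Rdiv_lt_0_compat; [lra | apply exp_pos]).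
  rewrite !ln_div, !ln_exp by (lra || apply exp_pos).
  enough (ln (1 - AM n x) - ln (AM n x)
          < AM n (fun i => ln (1 - x i)) + -1 * AM n (fun i => ln (x i))) by lra.
  apply Hj; auto.
  - intros a b z Ha Hb Hz. lra.
  - intros z Hz. auto_derive; [lra | field; lra].
  - intros a b Ha Hb Hab.
    assert (0 < a * (1 - a)) by nra. assert (a * (1 - a) < b * (1 - b)) by nra.
    apply Ropp_lt_contravar, Rinv_lt_contravar; [apply Rmult_lt_0_compat|]; lra.
Qed.

Lemma half_le_GM' : 1/2 <= GM' n x.
Proof.
  rewrite GM'_eq_exp, <- (exp_ln (1/2)) by lra. apply exp_le.
  rewrite <- (AM_const n Hn (ln (1/2))). apply AM_le; [exact Hn|].
  intros i Hi. pose proof (Hx i Hi). apply ln_le; lra.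
Qed.

Lemma alzer_ineq : nonconstant n x -> AM' n x - GM' n x < AM n x - GM n x.
Proof.
  intros (i & j & Hi & Hj & Hij).
  set (e := fun k => 1/2 - x k).
  assert (He : forall k, (k < n)%nat -> 0 <= e k < 1/2) by (intros k Hk; pose proof (Hx k Hk); unfold e; lra).
  assert (Hnc : nonconstant n e) by (exists i, j; unfold e; repeat split; auto; lra).
  pose proof (alzer_zeta n e Hn He Hnc) as Hz.
  assert (Hz1 : zeta n e 1 = GM n x).
  { unfold zeta, log_zeta. rewrite GM_eq_exp by (auto; intros k Hk; apply Hx, Hk).
    f_equal. apply AM_ext. intros k Hk. unfold e. apply f_equal. ring. }
  assert (Hzm1 : zeta n e (-1) = GM' n x).
  { unfold zeta, log_zeta. rewrite GM'_eq_exp. f_equal. apply AM_ext. intros k Hk.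
    unfold e. apply f_equal. lra. }
  assert (Hz0 : zeta n e 0 = 1/2).
  { unfold zeta, log_zeta. rewrite (AM_ext n _ (fun _ => ln (1/2))) by (intros; apply f_equal; ring).
    rewrite AM_const by exact Hn. apply exp_ln. lra. }
  assert (Hm0 : moment n e 1 0 = 1 - 2 * AM n x).
  { unfold moment, weight. rewrite (AM_ext n _ (fun k => 1 + -2 * x k)) by (intros; unfold e; field).
    rewrite AM_plus, AM_const, AM_scal by exact Hn. ring. }
  rewrite AM'_eq. rewrite Hz1, Hzm1, Hz0, Hm0 in Hz. lra.
Qed.

End ComplementaryMeans.

Theorem theorem4p1 (n : nat) (x : nat -> R) :
  (1 <= n)%nat ->
  (forall i, (i < n)%nat -> 0 < x i <= 1/2) ->
  (exists i j, (i < n)%nat /\ (j < n)%nat /\ x i <> x j) ->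
  let A := AM n x in let G := GM n x in
  let A' := AM' n x in let G' := GM' n x in
  let r := ln (A' / G') / ln (A / G) in
  let L := ln (sqrt (A' * G' / (A * G))) in
  (A' / G' < Rpower (A / G) ((A' - G') / (A - G) - r * L) /\
   Rpower (A / G) ((A' - G') / (A - G) - r * L)
     < Rpower (A / G) ((A' - G') / (A - G) - r * ln (A' / A)) /\
   Rpower (A / G) ((A' - G') / (A - G) - r * ln (A' / A))
     < Rpower (A / G) (1 - r * ln (A' / A)) /\
   Rpower (A / G) (1 - r * ln (A' / A)) < A / G) /\
  (A' / G' < Rmax (Rpower (A' / G') (1 + L))
                  (Rpower (A' / G') ((A - G) / (A' - G'))) /\
   Rmax (Rpower (A' / G') (1 + L)) (Rpower (A' / G') ((A - G) / (A' - G')))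
     < Rpower (A' / G') ((1 + L) * ((A - G) / (A' - G'))) /\
   Rpower (A' / G') ((1 + L) * ((A - G) / (A' - G'))) < A / G) /\
  (A' ^ n - G' ^ n) / (A ^ n - G ^ n)
    < (A' ^ n * G' ^ n * ln (A' / G')) / (A ^ n * G ^ n * ln (A / G)).
Proof.
  intros Hn Hx Hnc A G A' G' r L.
  assert (Hx' : forall i, (i < n)%nat -> 0 < 1 - x i) by (intros i Hi; pose proof (Hx i Hi); lra).
  assert (HG : 0 < G < A) by (split; [apply GM_pos | apply GM_lt_AM; auto; intros i Hi; apply Hx, Hi]).
  assert (HG' : 0 < G' < A').
  { split; [apply GM_pos | apply GM_lt_AM; auto].
    destruct Hnc as (i & j & Hi & Hj & Hij). exists i, j. repeat split; auto. lra. }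
  assert (HAG' : A <= G').
  { pose proof (AM_bounds n x Hn Hx). pose proof (half_le_GM' n x Hn Hx). unfold A, G'. lra. }
  pose proof (ky_fan n x Hn Hx Hnc) as Hfan.
  pose proof (alzer_ineq n x Hn Hx Hnc) as Halzer.
  split; [|split].
  - exact (means_chain_AG A G A' G' HG HG' HAG' Hfan Halzer).
  - exact (means_chain_A'G' A G A' G' HG HG' HAG' Hfan Halzer).
  - apply means_power_ineq; auto. lra.
Qed.
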